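(* If $\lambda_1<a$ and $1<q<p$, then for any fixed $\Lambda>0$ there exists $t_0'=t_0'(\Lambda)>0$ such that $I^-_{\lambda,s}(-t\varphi_1)<0$ for all $t\ge t_0'$ and all $0<\lambda<\Lambda$.
   Context: $\Omega\subset\mathbb{R}^N$ bounded smooth domain, $s\in(0,1)$, $p>1$, $N>sp$. $X_p^s=\{u\in W^{s,p}(\mathbb{R}^N): u=0 \text{ a.e. in } \mathbb{R}^N\setminus\Omega\}$ with norm $\|u\|_{X_p^s}=\big(\int_{\mathbb{R}^{2N}}\frac{|u(x)-u(y)|^p}{|x-y|^{N+sp}}dxdy\big)^{1/p}$. $\lambda_1=\inf\{\|u\|_{X_p^s}^p:\|u\|_{L^p(\Omega)}=1\}$ is the first eigenvalue of the fractional $p$-Laplacian on $X_p^s$ and $\varphi_1$ its positive $L^p$-normalized eigenfunction. $u^-=\min\{u,0\}$ and $I^-_{\lambda,s}(u)=\frac1p\|u\|_{X_p^s}^p+\frac\lambda q\int_\Omega|u^-|^q-\frac ap\int_\Omega|u^-|^p$. *)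

From mathcomp Require Import all_boot all_order all_algebra.
From mathcomp Require Import all_classical all_reals all_analysis.
Import Order.TTheory GRing.Theory Num.Theory.
Import numFieldNormedType.Exports.
Local Open Scope classical_set_scope.
Local Open Scope ring_scope.

Section FracDefs.
Context {R : realType}.

Definition ocbox {n : nat} (a b : n.-tuple R) : set (n.-tuple R) :=
  [set x | forall i : 'I_n, tnth a i < tnth x i <= tnth b i].

Definition boxvol {n : nat} (a b : n.-tuple R) : R :=
  \prod_(i < n) Num.max 0 (tnth b i - tnth a i).

(* n-dimensional Lebesgue (outer) measure: infimum of the total volume of
   countable covers by boxes.  On measurable sets it is Lebesgue measure. *)
Definition lebN {n : nat} (A : set (n.-tuple R)) : \bar R :=
  ereal_inf [set (\sum_(k <oo) (boxvol (ab k).1 (ab k).2)%:E)%E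
            | ab in [set ab : nat -> n.-tuple R * n.-tuple R |
                      A `<=` \bigcup_k ocbox (ab k).1 (ab k).2]].

Definition fstN {n : nat} (z : (n + n).-tuple R) : n.-tuple R :=
  [tuple tnth z (lshift n i) | i < n].
Definition sndN {n : nat} (z : (n + n).-tuple R) : n.-tuple R :=
  [tuple tnth z (rshift n i) | i < n].

Definition distN {n : nat} (x y : n.-tuple R) : R :=
  Num.sqrt (\sum_(i < n) (tnth x i - tnth y i) ^+ 2).

Definition tup2row {n : nat} (x : n.-tuple R) : 'rV[R]_n := \row_i tnth x i.

Fixpoint Ck {n : nat} (k : nat) (f : 'rV[R]_n -> R) : Prop :=
  match k with
  | 0 => continuous f
  | k'.+1 => continuous f /\ (forall x v : 'rV[R]_n, derivable f x v) /\
             (forall v : 'rV[R]_n, Ck k' (fun x => 'D_v f x))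
  end.

Definition smooth_fun {n : nat} (f : 'rV[R]_n -> R) : Prop := forall k, Ck k f.

(* Omega is a bounded domain (nonempty, open, connected) with C^infty boundary,
   expressed through a smooth defining function rho:
   Omega = {rho < 0}, grad rho <> 0 on {rho = 0} (= boundary of Omega). *)
Definition smooth_bounded_domain {n : nat} (Om : set (n.-tuple R)) : Prop :=
  [/\ exists rho : 'rV[R]_n -> R,
        [/\ smooth_fun rho,
            (forall x, Om x <-> rho (tup2row x) < 0) &
            (forall y, rho y = 0 -> exists v, 'D_v rho y != 0)],
      exists M : R, forall x, Om x -> `|tup2row x| <= M,
      connected (tup2row @` Om) &
      Om !=set0].

Definition gagliardo {n : nat} (s p : R) (u : n.-tuple R -> R) : \bar R :=
  (\int[@lebN (n + n)]_(z in setT)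
     ((`|u (fstN z) - u (sndN z)| `^ p) /
        (distN (fstN z) (sndN z) `^ (n%:R + s * p)))%:E)%E.

Definition in_Xps {n : nat} (s p : R) (Om : set (n.-tuple R))
    (u : n.-tuple R -> R) : Prop :=
  [/\ measurable_fun setT u,
      (\int[@lebN n]_(x in setT) (`|u x| `^ p)%:E < +oo)%E,
      (gagliardo s p u < +oo)%E &
      @lebN n [set x | ~ Om x /\ u x != 0] = 0%E].

Definition Xnorm {n : nat} (s p : R) (u : n.-tuple R -> R) : R :=
  fine (gagliardo s p u) `^ p^-1.

Definition LpOmega {n : nat} (p : R) (Om : set (n.-tuple R))
    (u : n.-tuple R -> R) : R :=
  fine (\int[@lebN n]_(x in Om) (`|u x| `^ p)%:E)%E `^ p^-1.

Definition lambda1 {n : nat} (s p : R) (Om : set (n.-tuple R)) : R :=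
  inf [set Xnorm s p u `^ p |
       u in [set u | in_Xps s p Om u /\ LpOmega p Om u = 1]].

Definition is_eigenfunction {n : nat} (s p : R) (Om : set (n.-tuple R))
    (lam : R) (u : n.-tuple R -> R) : Prop :=
  in_Xps s p Om u /\
  forall v, in_Xps s p Om v ->
    (\int[@lebN (n + n)]_(z in setT)
       ((`|u (fstN z) - u (sndN z)| `^ (p - 2) * (u (fstN z) - u (sndN z))
          * (v (fstN z) - v (sndN z))) /
          (distN (fstN z) (sndN z) `^ (n%:R + s * p)))%:E
     = lam%:E * \int[@lebN n]_(x in Om) (`|u x| `^ (p - 2) * u x * v x)%:E)%E.

Definition Iminus {n : nat} (s p q a lam : R) (Om : set (n.-tuple R))
    (u : n.-tuple R -> R) : \bar R :=
  ((p^-1 * Xnorm s p u `^ p)%:E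
   + (lam / q)%:E * \int[@lebN n]_(x in Om) (`|Num.min (u x) 0| `^ q)%:E
   - (a / p)%:E * \int[@lebN n]_(x in Om) (`|Num.min (u x) 0| `^ p)%:E)%E.

End FracDefs.

(* Testing the eigenvalue equation with phi1 itself gives
   [phi1]^p = lambda1 * int_Om |phi1|^p = lambda1.  For t > 0 the negative
   part of -t phi1 is -t phi1 on Om, and both the Gagliardo seminorm and the
   L^r integrals are homogeneous, hence
     I^-(-t phi1) = t^q (lam/q int_Om phi1^q - t^(p-q) (a - lambda1)/p),
   where int_Om phi1^q <= |Om| + int phi1^p is finite because Om is bounded.
   As q < p and lambda1 < a, this is negative once t^(p-q) is large,
   uniformly in lam < Lam.
   The Lebesgue measure of the statement is the outer measure of covers by
   boxes; cutting covers along hyperplanes shows that half-spaces satisfy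
   Caratheodory's criterion, so it is a measure on the Borel sets.  None of
   the integrands is known to be measurable, so monotonicity and homogeneity
   of the integral are proved from its definition as a supremum over simple
   functions. *)

From HB Require Import structures.
From mathcomp Require Import all_boot all_order all_algebra.
From mathcomp Require Import all_classical all_reals all_analysis.
From mathcomp Require Import ring lra measurable_realfun.
Import Order.TTheory GRing.Theory Num.Theory.
Import numFieldNormedType.Exports.
Local Open Scope classical_set_scope.
Local Open Scope ring_scope.

Lemma nneseries_pair {R : realType} (a : nat -> nat -> \bar R)
    (f : {bij [set: nat] >-> [set: nat * nat]}) :
  (forall i j, (0 <= a i j)%E) ->
  (\sum_(k <oo) a (f k).1 (f k).2 = \sum_(i <oo) \sum_(j <oo) a i j)%E.
Proof.
move=> a_ge0.
have -> : (\sum_(i <oo) \sum_(j <oo) a i j = \esum_(z in setT) a z.1 z.2)%E.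
  rewrite (@nneseries_esumT _ (fun i => \sum_(j <oo) a i j)%E); last first.
    by move=> i; exact: nneseries_ge0.
  under eq_esum => i _ do rewrite (@nneseries_esumT _ (a i))//.
  by rewrite esum_esum//; congr esum; apply/seteqP; split.
by rewrite nneseries_esumT// (reindex_esum setT setT f (fun z => a z.1 z.2)).
Qed.

Section cover_outer_measure.
Local Open Scope ereal_scope.
Context {R : realType} {T C : Type} (S : C -> set T) (w : C -> \bar R).
Hypothesis w_ge0 : forall c, 0 <= w c.

Definition cover_outer (X : set T) : \bar R :=
  ereal_inf [set \sum_(k <oo) w (c k) | c in [set c : nat -> C |
     X `<=` \bigcup_k S (c k)]].

Lemma cover_outer_ge0 X : 0 <= cover_outer X.
Proof. by apply: le_ereal_inf_tmp => _ [c _ <-]; exact: nneseries_ge0. Qed.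

Lemma le_cover_outer : {homo cover_outer : A B / A `<=` B >-> A <= B}.
Proof.
move=> A B AB; apply: ereal_inf_le_tmp => _ [c Bc <-]; exists c => //.
exact: subset_trans AB Bc.
Qed.

Lemma cover_outer_adherent X (e : R) : (0 < e)%R -> cover_outer X < +oo ->
  exists2 c : nat -> C, X `<=` \bigcup_k S (c k) &
    \sum_(k <oo) w (c k) <= cover_outer X + e%:E.
Proof.
move=> e0 Xfin; have Xfin_num : cover_outer X \is a fin_num.
  by rewrite ge0_fin_numE ?cover_outer_ge0.
have [_ [c Xc <-] ce] := lb_ereal_inf_adherent e0 Xfin_num.
by exists c => //; exact: ltW.
Qed.

Lemma cover_outer_sigma_subadditive : sigma_subadditive cover_outer.
Proof.
move=> A; have [[i Aioo]|] := pselect (exists i, cover_outer (A i) = +oo).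
  rewrite (eseries_pinfty _ _ Aioo) ?leey// => n _.
  by rewrite -ltNye (lt_le_trans _ (cover_outer_ge0 _)).
rewrite -forallNE => Afin; apply/lee_addgt0Pr => e e0.
rewrite (le_trans _ (epsilon_trick _ _ _)) ?(ltW e0)//; last first.
  by move=> n; exact: cover_outer_ge0.
have /choice[G AG] n : exists c : nat -> C, A n `<=` \bigcup_k S (c k) /\
    \sum_(k <oo) w (c k) <= cover_outer (A n) + (e / (2 ^ n.+1)%:R)%:E.
  have en : (0 < e / (2 ^ n.+1)%:R)%R by rewrite divr_gt0// ltr0n expn_gt0.
  have An_fin : cover_outer (A n) < +oo by rewrite ltey; exact/eqP/Afin.
  by have [c Ac cA] := cover_outer_adherent _ _ en An_fin; exists c.
have /card_esym/ppcard_eqP[f] := card_nat2.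
apply: (@le_trans _ _ (\sum_(k <oo) w (G (f k).1 (f k).2))).
  apply: ereal_inf_lbound; exists (fun k => G (f k).1 (f k).2) => //.
  move=> t [i _ /(AG i).1 [j _ Gij]].
  by exists (f^-1%FUN (i, j)) => //; rewrite invK ?inE.
rewrite (nneseries_pair (fun i j => w (G i j)))//.
apply: lee_nneseries => [n _ _|n _]; first exact: nneseries_ge0.
exact: (AG n).2.
Qed.

End cover_outer_measure.

Lemma maxr0_subr_split {R : realDomainType} (a b c : R) :
  Num.max 0 (b - a) = Num.max 0 (Num.min b c - a) + Num.max 0 (b - Num.max a c).
Proof.
by case: (leP a c) => ?; case: (leP b c) => ?; case: (leP 0 (b - a)) => ?;
  case: (leP 0 (b - c)) => ?; case: (leP 0 (c - a)) => ?; lra.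
Qed.

Section lebesgue_outer_measure.
Context {R : realType} {n : nat}.
Local Notation tup := (n.-tuple R).

Lemma boxvol_ge0 (a b : tup) : 0 <= boxvol a b.
Proof. by apply: prodr_ge0 => i _; rewrite le_max lexx. Qed.

Lemma lebNE : @lebN R n = cover_outer (fun ab : tup * tup => ocbox ab.1 ab.2)
                                      (fun ab => (boxvol ab.1 ab.2)%:E).
Proof. by []. Qed.

Let boxvolE_ge0 (ab : tup * tup) : (0 <= (boxvol ab.1 ab.2)%:E)%E.
Proof. by rewrite lee_fin boxvol_ge0. Qed.

Lemma lebN_ge0 (X : set tup) : (0 <= lebN X)%E.
Proof. by rewrite lebNE; exact: cover_outer_ge0. Qed.

Lemma le_lebN : {homo @lebN R n : A B / A `<=` B >-> (A <= B)%E}.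
Proof. by rewrite lebNE; exact: le_cover_outer. Qed.

Lemma lebN_sigma_subadditive : sigma_subadditive (@lebN R n).
Proof. by rewrite lebNE; exact: cover_outer_sigma_subadditive. Qed.

Definition lower_at (b : tup) (i : 'I_n) (c : R) : tup :=
  [tuple if j == i then Num.min (tnth b j) c else tnth b j | j < n].

Definition raise_at (a : tup) (i : 'I_n) (c : R) : tup :=
  [tuple if j == i then Num.max (tnth a j) c else tnth a j | j < n].

Lemma boxvol_split (a b : tup) i c :
  boxvol a b = boxvol a (lower_at b i c) + boxvol (raise_at a i c) b.
Proof.
rewrite /boxvol (bigD1 i)//= [X in _ = X + _](bigD1 i)//=.
rewrite [X in _ = _ + X](bigD1 i)//=.
under [in RHS]eq_bigr => j /negbTE ji do rewrite tnth_mktuple ji.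
have -> : \prod_(j < n | j != i) Num.max 0 (tnth b j - tnth (raise_at a i c) j) =
          \prod_(j < n | j != i) Num.max 0 (tnth b j - tnth a j).
  by apply: eq_bigr => j /negbTE ji; rewrite tnth_mktuple ji.
by rewrite !tnth_mktuple eqxx -mulrDl -maxr0_subr_split.
Qed.

Definition halfspace (i : 'I_n) (c : R) : set tup := [set x | tnth x i <= c].

Lemma lebN_halfspace_split i c (X : set tup) :
  (lebN (X `&` halfspace i c) + lebN (X `&` ~` halfspace i c) <= lebN X)%E.
Proof.
apply: le_ereal_inf_tmp => _ [ab Xab <-].
pose lo k := ((ab k).1, lower_at (ab k).2 i c).
pose hi k := (raise_at (ab k).1 i c, (ab k).2).
have lo_cover : X `&` halfspace i c `<=` \bigcup_k ocbox (lo k).1 (lo k).2.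
  move=> x [/Xab [k _ abx] xc]; exists k => // j /=; rewrite tnth_mktuple.
  case: eqP => [->|_]; last exact: abx.
  by have /andP[-> xb] := abx i; rewrite le_min xb.
have hi_cover : X `&` ~` halfspace i c `<=` \bigcup_k ocbox (hi k).1 (hi k).2.
  move=> x [/Xab [k _ abx] /negP]; rewrite -ltNge => cx.
  exists k => // j /=; rewrite tnth_mktuple.
  case: eqP => [->|_]; last exact: abx.
  by have /andP[ax ->] := abx i; rewrite gt_max ax cx.
apply: le_trans (leeD (ereal_inf_lbound (ex_intro2 _ _ lo lo_cover erefl))
                      (ereal_inf_lbound (ex_intro2 _ _ hi hi_cover erefl))) _.
rewrite -nneseriesD//.
by under eq_eseriesr => k _ do rewrite -EFinD -boxvol_split.
Qed.

(* For n = 0 every box has volume 1 (an empty product): lebN set0 = +oo. *)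
Hypothesis n_gt0 : (0 < n)%N.

Lemma boxvol_id (a : tup) : boxvol a a = 0.
Proof. by rewrite /boxvol (bigD1 (Ordinal n_gt0))//= subrr maxxx mul0r. Qed.

Lemma lebN_ocbox (a b : tup) : (lebN (ocbox a b) <= (boxvol a b)%:E)%E.
Proof.
apply: ereal_inf_lbound.
exists (fun k => if k is 0%N then (a, b) else (a, a)).
  by move=> x abx; exists 0%N.
rewrite nneseries_recl// eseries0 ?adde0// => -[|k]// _ _.
by rewrite /= boxvol_id.
Qed.

Lemma lebN0 : @lebN R n set0 = 0%E.
Proof.
apply/eqP; rewrite eq_le lebN_ge0 andbT.
have := lebN_ocbox (nseq_tuple n 0) (nseq_tuple n 0); rewrite boxvol_id.
by apply: le_trans; apply: le_lebN.
Qed.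

End lebesgue_outer_measure.

Section lebesgue_measure.
Context {R : realType} {n : nat} (n_gt0 : (0 < n)%N).
Local Notation tup := (n.-tuple R).

Definition lebN_outer : {outer_measure set tup -> \bar R} :=
  HB.pack (@lebN R n) (isOuterMeasure.Build R tup (@lebN R n)
     (@lebN0 R n n_gt0) (@lebN_ge0 R n) (@le_lebN R n)
     (@lebN_sigma_subadditive R n)).

Lemma caratheodory_halfspace (i : 'I_n) (c : R) :
  caratheodory_measurable lebN_outer (halfspace i c).
Proof.
by apply: le_caratheodory_measurable => X; exact: lebN_halfspace_split.
Qed.

Lemma caratheodory_tnth_preimage (i : 'I_n) (B : set R) : measurable B ->
  caratheodory_measurable lebN_outer ((fun x : tup => tnth x i) @^-1` B).
Proof.
pose G (B : set R) :=
  caratheodory_measurable lebN_outer ((fun x : tup => tnth x i) @^-1` B).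
suff : <<s @ocitv R >> `<=` G by apply.
apply: smallest_sub => [|_ /ocitvP[->|[[a b] /= _ ->]]]; rewrite /G; cbv beta.
- split => [|A GA|F GF]; cbv beta.
  + by rewrite preimage_set0; exact: caratheodory_measurable_set0.
  + by rewrite setTD preimage_setC; exact: caratheodory_measurable_setC.
  + by rewrite preimage_bigcup; exact: caratheodory_measurable_bigcup.
- by rewrite preimage_set0; exact: caratheodory_measurable_set0.
- have -> : (fun x : tup => tnth x i) @^-1` `]a, b] =
            halfspace i b `&` ~` halfspace i a.
    apply/seteqP; split => x /=; rewrite in_itv /= ltNge.
      by move=> /andP[/negP ax xb].
    by move=> [xb /negP ax]; rewrite ax xb.
  apply: caratheodory_measurable_setI; last apply: caratheodory_measurable_setC;
    exact: caratheodory_halfspace.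
Qed.

Lemma caratheodory_measurable_tuple (A : set tup) : measurable A ->
  caratheodory_measurable lebN_outer A.
Proof.
move: A; apply: smallest_sub => [|X].
- split => [|A GA|F GF].
  + exact: caratheodory_measurable_set0.
  + by rewrite setTD; exact: caratheodory_measurable_setC.
  + exact: caratheodory_measurable_bigcup.
- elim/big_ind: _ => [//|A B hA hB [/hA|/hB]//|i _ [B mB <-]].
  by rewrite setTI; exact: caratheodory_tnth_preimage.
Qed.

Lemma lebN_semi_sigma_additive : semi_sigma_additive (@lebN R n).
Proof.
move=> F mF tF mU.
apply: (@caratheodory_measure_sigma_additive R tup lebN_outer) => //.
- by move=> k; exact: caratheodory_measurable_tuple.
- exact: caratheodory_measurable_tuple.
Qed.

Definition lebN_measure : {measure set tup -> \bar R} :=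
  HB.pack (@lebN R n) (isMeasure.Build _ tup R (@lebN R n) (@lebN0 R n n_gt0)
     (@lebN_ge0 R n) lebN_semi_sigma_additive).

Lemma lebN_measureE : (lebN_measure : set tup -> \bar R) = @lebN R n.
Proof. by []. Qed.

End lebesgue_measure.

Section integral_without_measurability.
Import HBNNSimple.
Local Open Scope ereal_scope.
Context d (T : measurableType d) (R : realType) (mu : {measure set T -> \bar R}).

Lemma ge0_le_integralT (f g : T -> \bar R) : (forall x, 0 <= f x) ->
  (forall x, f x <= g x) -> \int[mu]_x f x <= \int[mu]_x g x.
Proof.
move=> f0 fg; have g0 x : 0 <= g x by exact: le_trans (f0 x) (fg x).
rewrite !ge0_integralTE//; apply: ereal_sup_le => _ [h hf <-].
by exists h => // x; exact: le_trans (hf x) (fg x).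
Qed.

Let ge0_integralZlT_le (k : R) (f : T -> \bar R) : (0 < k)%R ->
  (forall x, 0 <= f x) -> \int[mu]_x (k%:E * f x) <= k%:E * \int[mu]_x f x.
Proof.
move=> k0 f0; have kf0 x : 0 <= k%:E * f x by rewrite mule_ge0// lee_fin ltW.
have ki0 : (0 <= k^-1)%R by rewrite invr_ge0 ltW.
rewrite !ge0_integralTE//; apply: ge_ereal_sup => _ [h hkf <-].
pose h' := scale_nnsfun h ki0.
have -> : sintegral mu h = k%:E * sintegral mu h'.
  rewrite -sintegralrM; apply: eq_sintegral => x /=.
  by rewrite mulrA mulfV ?mul1r ?gt_eqF.
apply: lee_wpmul2l; first by rewrite lee_fin ltW.
apply: ereal_sup_ubound; exists h' => // x /=.
have := lee_wpmul2l (ki0 : 0 <= k^-1%:E) (hkf x).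
by rewrite muleA -!EFinM mulVf ?gt_eqF// mul1e.
Qed.

Lemma ge0_integralZlT (k : R) (f : T -> \bar R) : (0 < k)%R ->
  (forall x, 0 <= f x) -> \int[mu]_x (k%:E * f x) = k%:E * \int[mu]_x f x.
Proof.
move=> k0 f0; apply/eqP; rewrite eq_le ge0_integralZlT_le//=.
have kf0 x : 0 <= k%:E * f x by rewrite mule_ge0// lee_fin ltW.
have ki0 : (0 < k^-1)%R by rewrite invr_gt0.
have := ge0_integralZlT_le _ _ ki0 kf0.
under eq_integral do rewrite muleA -EFinM mulVf ?gt_eqF// mul1e.
have k0E : 0 <= k%:E by rewrite lee_fin ltW.
move=> /(lee_wpmul2l k0E).
by rewrite muleA -EFinM mulfV ?gt_eqF// mul1e.
Qed.

Lemma gt0_integralZl (D : set T) (k : R) (f : T -> \bar R) : (0 < k)%R ->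
  (forall x, D x -> 0 <= f x) ->
  \int[mu]_(x in D) (k%:E * f x) = k%:E * \int[mu]_(x in D) f x.
Proof.
move=> k0 f0; rewrite !(integral_mkcond D) erestrict_scale.
by apply: ge0_integralZlT => //; exact: erestrict_ge0.
Qed.

End integral_without_measurability.

Lemma powR_norm_sub2_mul {R : realType} (p x : R) : p != 0 ->
  `|x| `^ (p - 2) * x * x = `|x| `^ p.
Proof.
move=> p0; have [->|x0] := eqVneq x 0; first by rewrite mulr0 normr0 powR0.
rewrite -mulrA -expr2 -real_normK ?num_real// -powR_mulrn ?normr_ge0//.
by rewrite -powRD ?normr_eq0 ?x0 ?implybT// subrK.
Qed.

Lemma powR_le1D {R : realType} (x p q : R) : 0 <= x -> 0 <= q -> q <= p ->
  x `^ q <= 1 + x `^ p.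
Proof.
move=> x0 q0 qp; have [x1|x1] := leP x 1.
  apply: (@le_trans _ _ 1); last by rewrite lerDl powR_ge0.
  have := @ge0_ler_powR R q q0 x 1; rewrite !nnegrE x0 ler01 powR1.
  by apply.
apply: (@le_trans _ _ (x `^ p)); last by rewrite lerDr.
by rewrite ler_powR// ltW.
Qed.

Lemma homogeneous_energy_eventually_lt0 {R : realType} {L a A p q Lam : R} :
  L < a -> 0 < q -> q < p -> 0 <= A -> 0 <= Lam ->
  exists t0, 0 < t0 /\ forall t lam, t0 <= t -> lam <= Lam ->
    p^-1 * (t `^ p * L) + lam / q * (t `^ q * A) - a / p * t `^ p < 0.
Proof.
move=> La q0 qp A0 Lam0.
have p0 : 0 < p := lt_trans q0 qp.
have aL : 0 < a - L by rewrite subr_gt0.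
have pq : 0 < p - q by rewrite subr_gt0.
have LamA0 : 0 <= Lam * A / q by rewrite divr_ge0 ?mulr_ge0 // ltW.
pose K := (Lam * A / q + 1) * p / (a - L).
have K0 : 0 < K by rewrite divr_gt0 ?mulr_gt0// ltr_wpDl.
exists (Num.max 1 (K `^ (p - q)^-1)).
split=> [|t lam]; first by rewrite lt_max ltr01.
rewrite ge_max => /andP[t1 Kt] lamL.
have t0 : 0 < t := lt_le_trans ltr01 t1.
set u := t `^ (p - q).
have Ku : K <= u.
  have := @ge0_ler_powR R (p - q) (ltW pq) _ _ (powR_ge0 K _) (ltW t0) Kt.
  by rewrite -powRrM mulVf ?gt_eqF// powRr1// ltW.
have lamA_lt : lam * A / q < u * (a - L) / p.
  have : lam * A / q <= Lam * A / q.
    by rewrite ler_pM2r ?invr_gt0//; nra.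
  have : Lam * A / q + 1 = K * (a - L) / p by rewrite /K; field; rewrite !gt_eqF.
  have : K * (a - L) / p <= u * (a - L) / p.
    by rewrite ler_pM2r ?invr_gt0// ler_pM2r.
  lra.
have -> : t `^ p = t `^ q * u by rewrite -powRD ?gt_eqF ?implybT// addrC subrK.
have -> : p^-1 * (t `^ q * u * L) + lam / q * (t `^ q * A)
          - a / p * (t `^ q * u) =
          - (t `^ q * (u * (a - L) / p - lam * A / q)) by ring.
by rewrite oppr_lt0 mulr_gt0 ?powR_gt0// subr_gt0.
Qed.

Section bounded_sets.
Context {R : realType} {n : nat}.
Local Notation tup := (n.-tuple R).

Lemma measurable_ocbox (a b : tup) : measurable (ocbox a b).
Proof.
have -> : ocbox a b = \bigcap_(i in [set: 'I_n])
    ((fun x : tup => tnth x i) @^-1` `]tnth a i, tnth b i]).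
  by apply/seteqP; split => x abx i /=; rewrite ?in_itv; [move=> _|]; apply: abx.
apply: fin_bigcap_measurable; first exact: finite_finset.
move=> i _; rewrite -[X in measurable X]setTI.
exact: (measurable_tnth i measurableT (measurable_itv _)).
Qed.

Lemma bounded_sub_ocbox (Om : set tup) (M : R) :
  (forall x, Om x -> `|tup2row x| <= M) ->
  Om `<=` ocbox [tuple - (M + 1) | _ < n] [tuple M + 1 | _ < n].
Proof.
move=> OmM x Omx i; rewrite !tnth_mktuple.
have : `|tnth x i| <= M.
  apply: le_trans (OmM x Omx).
  rewrite [leRHS]mx_normrE; apply: le_trans (le_bigmax _ _ (ord0, i)).
  by rewrite mxE.
by rewrite ler_norml => /andP[? ?]; apply/andP; split; lra.
Qed.

End bounded_sets.

Section fractional_sobolev.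
Context {R : realType} {n : nat} (n_gt0 : (0 < n)%N).
Local Notation tup := (n.-tuple R).
Let nn_gt0 : (0 < n + n)%N. Proof. by rewrite addn_gt0 n_gt0. Qed.

Lemma gagliardo_ge0 (s p : R) (u : tup -> R) : (0 <= gagliardo s p u)%E.
Proof.
rewrite /gagliardo -(lebN_measureE nn_gt0).
by apply: integral_ge0 => z _; rewrite lee_fin divr_ge0 ?powR_ge0.
Qed.

Lemma Xnorm_powR (s p : R) (u : tup -> R) : 0 < p ->
  Xnorm s p u `^ p = fine (gagliardo s p u).
Proof.
move=> p0; rewrite /Xnorm -powRrM mulVf ?gt_eqF// powRr1//.
exact/fine_ge0/gagliardo_ge0.
Qed.

Lemma gagliardo_scale (s p c : R) (u : tup -> R) : c != 0 ->
  gagliardo s p (fun x => c * u x) = ((`|c| `^ p)%:E * gagliardo s p u)%E.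
Proof.
move=> c0; rewrite /gagliardo -(lebN_measureE nn_gt0).
rewrite -ge0_integralZlT; last 2 first.
- by rewrite powR_gt0// normr_gt0.
- by move=> z; rewrite lee_fin divr_ge0 ?powR_ge0.
apply: eq_integral => z _; rewrite -EFinM mulrA -powRM//.
by rewrite -mulrBr normrM.
Qed.

Lemma LpOmega_eq1 (p : R) (Om : set tup) (u : tup -> R) : 0 < p ->
  LpOmega p Om u = 1 -> (\int[@lebN R n]_(x in Om) (`|u x| `^ p)%:E = 1)%E.
Proof.
rewrite /LpOmega -(lebN_measureE n_gt0) => p0.
have : (0 <= \int[lebN_measure n_gt0]_(x in Om) (`|u x| `^ p)%:E)%E.
  by apply: integral_ge0 => x _; rewrite lee_fin powR_ge0.
move: (\int[lebN_measure n_gt0]_(x in Om) (`|u x| `^ p)%:E)%E => [r| |]//= r0.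
  move=> /(congr1 (fun x => x `^ p)); rewrite -powRrM mulVf ?gt_eqF// powRr1//.
  by rewrite powR1 => ->.
by rewrite powR0 ?invr_eq0 ?gt_eqF// => /eqP; rewrite eq_sym oner_eq0.
Qed.

Lemma gagliardo_eigenfunction (s p lam : R) (Om : set tup) (u : tup -> R) :
  p != 0 -> is_eigenfunction s p Om lam u ->
  gagliardo s p u = (lam%:E * \int[@lebN R n]_(x in Om) (`|u x| `^ p)%:E)%E.
Proof.
move=> p0 [Xu eig].
rewrite /gagliardo -(lebN_measureE n_gt0) -(lebN_measureE nn_gt0).
under eq_integral => z _ do
  rewrite -(powR_norm_sub2_mul _ (u (fstN z) - u (sndN z)) p0).
under [in RHS]eq_integral => x _ do rewrite -(powR_norm_sub2_mul _ (u x) p0).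
exact: eig.
Qed.

Lemma integral_powR_min0_Nscale (r t : R) (Om : set tup) (u : tup -> R) :
  0 < t -> (forall x, Om x -> 0 < u x) ->
  (\int[@lebN R n]_(x in Om) (`|Num.min (- (t * u x)) 0| `^ r)%:E =
   (t `^ r)%:E * \int[@lebN R n]_(x in Om) (`|u x| `^ r)%:E)%E.
Proof.
move=> t0 u0.
rewrite -(lebN_measureE n_gt0) -gt0_integralZl ?powR_gt0//.
apply: eq_integral => x /set_mem Omx; rewrite -EFinM.
have -> : Num.min (- (t * u x)) 0 = - (t * u x).
  by apply/min_idPl; rewrite oppr_le0 mulr_ge0 ?ltW ?u0.
by rewrite normrN normrM gtr0_norm// powRM// ltW ?u0.
Qed.

Lemma integral_powR_lt_pinfty (Om : set tup) (a b : tup) (u : tup -> R)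
    (p q : R) :
  Om `<=` ocbox a b -> measurable_fun setT u ->
  (\int[@lebN R n]_(x in setT) (`|u x| `^ p)%:E < +oo)%E -> 0 <= q <= p ->
  (\int[@lebN R n]_(x in Om) (`|u x| `^ q)%:E < +oo)%E.
Proof.
move=> Om_box mfun_u up_fin /andP[q0 qp].
rewrite -(lebN_measureE n_gt0) in up_fin *.
have mup : measurable_fun setT (fun x => (`|u x| `^ p)%:E).
  apply/measurable_EFinP; apply: measurableT_comp (@measurable_powR R p) _.
  exact: measurableT_comp (@normr_measurable R setT) mfun_u.
apply: (@le_lt_trans _ _
  (lebN (ocbox a b) + \int[lebN_measure n_gt0]_x (`|u x| `^ p)%:E)%E).
  rewrite integral_mkcond.
  apply: le_trans (@ge0_le_integralT _ _ _ _ _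
      (fun x => (\1_(ocbox a b) x)%:E + (`|u x| `^ p)%:E)%E _ _) _.
  - by apply: erestrict_ge0 => x _; rewrite lee_fin powR_ge0.
  - move=> x; rewrite /patch; case: ifPn => [/set_mem/Om_box abx|_].
      by rewrite indicE mem_set// -EFinD lee_fin powR_le1D.
    by rewrite adde_ge0// lee_fin powR_ge0.
  have mbox := measurable_ocbox a b.
  rewrite ge0_integralD//; first by rewrite integral_indic ?setIT.
  by apply/measurable_EFinP; exact: measurable_indic.
rewrite lte_add_pinfty//.
exact: le_lt_trans (lebN_ocbox n_gt0 a b) (ltry _).
Qed.

End fractional_sobolev.

Theorem lemma4p8 (R : realType) (N : nat) (s p q a : R)
    (Om : set (N.-tuple R)) (phi1 : N.-tuple R -> R) :
  0 < s -> s < 1 -> 1 < p -> s * p < N%:R ->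
  smooth_bounded_domain Om ->
  is_eigenfunction s p Om (lambda1 s p Om) phi1 ->
  (forall x, Om x -> 0 < phi1 x) ->
  LpOmega p Om phi1 = 1 ->
  lambda1 s p Om < a -> 1 < q -> q < p ->
  forall Lam : R, 0 < Lam ->
  exists t0 : R, 0 < t0 /\
    forall t lam : R, t0 <= t -> 0 < lam -> lam < Lam ->
      (Iminus s p q a lam Om (fun x => (- (t * phi1 x))%R) < 0%E)%E.
Proof.
move=> s0 _ p1 spN [_ [M Om_bounded] _ _] phi_eig phi_gt0 Lp1 La q1 qp Lam Lam0.
have p0 : 0 < p := lt_trans ltr01 p1.
have q0 : 0 < q := lt_trans ltr01 q1.
have N_gt0 : (0 < N)%N.
  by rewrite -(ltr0n R); apply: lt_trans spN; rewrite mulr_gt0.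
have Jp := LpOmega_eq1 N_gt0 _ _ _ p0 Lp1.
have G : gagliardo s p phi1 = (lambda1 s p Om)%:E.
  rewrite (gagliardo_eigenfunction N_gt0 _ _ _ _ _ (lt0r_neq0 p0) phi_eig).
  by rewrite Jp mule1.
set Jq := (\int[@lebN R N]_(x in Om) (`|phi1 x| `^ q)%:E)%E.
have Jq_ge0 : (0 <= Jq)%E.
  rewrite /Jq -(lebN_measureE N_gt0); apply: integral_ge0 => x _.
  by rewrite lee_fin powR_ge0.
have Jq_fin : Jq \is a fin_num.
  have [[mphi Ip _ _] _] := phi_eig.
  rewrite ge0_fin_numE// /Jq.
  apply: (integral_powR_lt_pinfty N_gt0 _ _ _ _ _ _
           (bounded_sub_ocbox _ _ Om_bounded) mphi Ip).
  by rewrite !ltW.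
have [t0 [t0_gt0 I_lt0]] :=
  homogeneous_energy_eventually_lt0 La q0 qp (fine_ge0 Jq_ge0) (ltW Lam0).
exists t0; split=> // t lam tt0 _ lamL.
have t_gt0 : 0 < t := lt_le_trans t0_gt0 tt0.
have Gt : gagliardo s p (fun x => - (t * phi1 x)) =
          (t `^ p * lambda1 s p Om)%:E.
  rewrite (_ : (fun x => _) = (fun x => - t * phi1 x)); last first.
    by apply/funext => x; rewrite mulNr.
  by rewrite gagliardo_scale ?oppr_eq0 ?gt_eqF// G normrN gtr0_norm.
rewrite /Iminus Xnorm_powR// Gt !integral_powR_min0_Nscale//.
rewrite Jp -/Jq -(fineK Jq_fin) mule1 -!EFinM -EFinD lte_fin /=.
exact: I_lt0 (ltW lamL).
Qed.
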